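(* Let $i\colon H\to G$ be a faithful functor of finite groupoids. Let $E\xrightarrow{k}E'\xrightarrow{\iota_{E'}}H$ and $F\xrightarrow{\ell}F'\xrightarrow{\iota_{F'}}H$ be faithful functors, and put $\iota_E=\iota_{E'}k$, $\iota_F=\iota_{F'}\ell$. Consider the decompositions $E\times_GF\cong E\times_HF\sqcup\partial_i(E,F)$ and $E'\times_GF'\cong E'\times_HF'\sqcup\partial_i(E',F')$. Then the canonical functor $E\times_GF\to E'\times_GF'$, $(x,y,g)\mapsto(k(x),\ell(y),g)$, respects these decompositions: it maps (the image of) $E\times_HF$ into (the image of) $E'\times_HF'$, where it agrees with the functor $(x,y,h)\mapsto(k(x),\ell(y),h)$, and it maps $\partial_i(E,F)$ into $\partial_i(E',F')$. Hence it defines a unique functor $\partial_i(k,\ell)\colon\partial_i(E,F)\to\partial_i(E',F')$, and this functor is faithful.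
   Context: A finite groupoid is a finite category all of whose morphisms are invertible. For functors $a\colon X\to Z$, $b\colon Y\to Z$ of finite groupoids, the isocomma $X\times_ZY$ has objects the triples $(x,y,g)$ with $x\in X$, $y\in Y$, $g\colon a(x)\to b(y)$ an isomorphism in $Z$, and morphisms $(x,y,g)\to(x',y',g')$ the pairs $(h,k)$, $h\colon x\to x'$, $k\colon y\to y'$, with $g'a(h)=b(k)g$. Here $E\times_HF$ is the isocomma of $\iota_E,\iota_F$ and $E\times_GF$ that of $i\iota_E,i\iota_F$ (similarly for $E',F'$). The functor $E\times_HF\to E\times_GF$, $(x,y,h)\mapsto(x,y,i(h))$, identity on morphisms, is fully faithful with image a union of connected components; $\partial_i(E,F)$ is the full subgroupoid of $E\times_GF$ consisting of the connected components not meeting this image, so that $E\times_GF\cong E\times_HF\sqcup\partial_i(E,F)$. *)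

From mathcomp Require Import all_boot.
Set Implicit Arguments.
Unset Strict Implicit.
Unset Printing Implicit Defensive.

(* A finite groupoid: a category with finitely many objects, finite hom-sets,
   in which every morphism is invertible.  [comp g f] is "g after f". *)
Record groupoid := Groupoid {
  ob : finType;
  hom : ob -> ob -> finType;
  idm : forall x, hom x x;
  comp : forall x y z, hom y z -> hom x y -> hom x z;
  compA : forall x y z w (h : hom z w) (g : hom y z) (f : hom x y),
      comp h (comp g f) = comp (comp h g) f;
  comp1m : forall x y (f : hom x y), comp (idm y) f = f;
  compm1 : forall x y (f : hom x y), comp f (idm x) = f;
  hom_inv : forall x y (f : hom x y),
      exists g : hom y x, comp g f = idm x /\ comp f g = idm y
}.
Arguments hom {_} _ _.
Arguments idm {_} _.
Arguments comp {_ x y z} _ _.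

Record functor (C D : groupoid) := Functor {
  fob : ob C -> ob D;
  fhom : forall x y, hom x y -> hom (fob x) (fob y);
  fhom1 : forall x, fhom (idm x) = idm (fob x);
  fhomM : forall x y z (g : hom y z) (f : hom x y),
      fhom (comp g f) = comp (fhom g) (fhom f)
}.
Arguments fob {C D}.
Arguments fhom {C D} _ {x y} _.

Definition faithful C D (F : functor C D) :=
  forall x y, injective (@fhom C D F x y).

Section Fcomp.
Variables (C D E : groupoid) (G : functor D E) (F : functor C D).
Definition fcomp_ob x := fob G (fob F x).
Definition fcomp_hom x y (f : hom x y) : hom (fcomp_ob x) (fcomp_ob y) :=
  fhom G (fhom F f).
Lemma fcomp1 x : fcomp_hom (idm x) = idm (fcomp_ob x).
Proof. by rewrite /fcomp_hom !fhom1. Qed.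
Lemma fcompM x y z (g : hom y z) (f : hom x y) :
  fcomp_hom (comp g f) = comp (fcomp_hom g) (fcomp_hom f).
Proof. by rewrite /fcomp_hom !fhomM. Qed.
Definition fcomp : functor C E := Functor fcomp1 fcompM.
End Fcomp.

(* morphism packed with its source and target, to compare functors *)
Definition tot (C : groupoid) (x y : ob C) (f : hom x y) :
  {p : ob C * ob C & hom p.1 p.2} := existT (fun p => hom p.1 p.2) (x, y) f.

Definition functor_eq C D (F G : functor C D) :=
  (forall x, fob F x = fob G x) /\
  (forall x y (f : hom x y), tot (fhom F f) = tot (fhom G f)).

Section Sub.
Variables (C : groupoid) (P : pred (ob C)).
Definition sub_ob : finType := Finite.clone {x : ob C | P x} _.
Definition sub_hom (a b : sub_ob) : finType := hom (val a) (val b).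
Definition subgroupoid : groupoid :=
  @Groupoid sub_ob sub_hom (fun a => idm (val a))
    (fun a b c g f => comp g f)
    (fun _ _ _ _ => @compA C _ _ _ _)
    (fun _ _ => @comp1m C _ _)
    (fun _ _ => @compm1 C _ _)
    (fun _ _ => @hom_inv C _ _).
Definition incl : functor subgroupoid C :=
  @Functor subgroupoid C val (fun a b (f : sub_hom a b) => f)
    (fun _ => erefl) (fun _ _ _ _ _ => erefl).
End Sub.

(* isocomma  X x_Z Y  of  a : X -> Z  and  b : Y -> Z *)
Section Isocomma.
Variables (X Y Z : groupoid) (a : functor X Z) (b : functor Y Z).

Definition iso_ob : finType :=
  Finite.clone {p : ob X * ob Y & hom (fob a p.1) (fob b p.2)} _.
Definition io_x (o : iso_ob) : ob X := (tag o).1.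
Definition io_y (o : iso_ob) : ob Y := (tag o).2.
Definition io_g (o : iso_ob) : hom (fob a (io_x o)) (fob b (io_y o)) := tagged o.

Definition iso_rel (o o' : iso_ob) (hk : hom (io_x o) (io_x o') * hom (io_y o) (io_y o')) :=
  comp (io_g o') (fhom a hk.1) == comp (fhom b hk.2) (io_g o).

Definition iso_hom (o o' : iso_ob) : finType :=
  Finite.clone {hk : hom (io_x o) (io_x o') * hom (io_y o) (io_y o') | iso_rel hk} _.

Lemma iso_idP o : iso_rel (o:=o) (o':=o) (idm (io_x o), idm (io_y o)).
Proof. by rewrite /iso_rel /= !fhom1 comp1m compm1. Qed.
Definition iso_id o : iso_hom o o := exist (@iso_rel o o) _ (iso_idP o).

Lemma iso_compP o1 o2 o3 (g : iso_hom o2 o3) (f : iso_hom o1 o2) :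
  iso_rel (comp (val g).1 (val f).1, comp (val g).2 (val f).2).
Proof.
case: g => [[g1 g2] Hg]; case: f => [[f1 f2] Hf] /=.
move/eqP: Hg => Hg; move/eqP: Hf => Hf; apply/eqP => /=.
by rewrite !fhomM compA Hg -compA Hf compA.
Qed.
Definition iso_comp o1 o2 o3 (g : iso_hom o2 o3) (f : iso_hom o1 o2) : iso_hom o1 o3 :=
  exist (@iso_rel o1 o3) _ (iso_compP g f).

Lemma iso_compA o1 o2 o3 o4 (h : iso_hom o3 o4) (g : iso_hom o2 o3) (f : iso_hom o1 o2) :
  iso_comp h (iso_comp g f) = iso_comp (iso_comp h g) f.
Proof. by apply: val_inj; rewrite /= !compA. Qed.
Lemma iso_comp1m o1 o2 (f : iso_hom o1 o2) : iso_comp (iso_id o2) f = f.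
Proof. by apply: val_inj; case: f => [[f1 f2] ?]; rewrite /= !comp1m. Qed.
Lemma iso_compm1 o1 o2 (f : iso_hom o1 o2) : iso_comp f (iso_id o1) = f.
Proof. by apply: val_inj; case: f => [[f1 f2] ?]; rewrite /= !compm1. Qed.

Lemma fhom_inv C D (F : functor C D) x y (f : hom x y) (g : hom y x) :
  comp g f = idm x -> comp f g = idm y ->
  comp (fhom F g) (fhom F f) = idm _ /\ comp (fhom F f) (fhom F g) = idm _.
Proof. by move=> H1 H2; rewrite -!fhomM H1 H2 !fhom1. Qed.

Lemma iso_inv o1 o2 (f : iso_hom o1 o2) :
  exists g : iso_hom o2 o1, iso_comp g f = iso_id o1 /\ iso_comp f g = iso_id o2.
Proof.
case: f => [[f1 f2] Hf0] /=; have /= Hf := eqP Hf0.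
have [g1 [H11 H12]] := hom_inv f1; have [g2 [H21 H22]] := hom_inv f2.
have [A1 A2] := fhom_inv a H11 H12; have [B1 B2] := fhom_inv b H21 H22.
have Hg : iso_rel (o:=o2) (o':=o1) (g1, g2).
  apply/eqP => /=.
  rewrite -[LHS]comp1m -B1 -compA (compA (fhom b f2)) -Hf -compA A2.
  by rewrite compm1.
exists (exist (@iso_rel o2 o1) _ Hg); split; apply: val_inj => /=.
  by rewrite H11 H21.
by rewrite H12 H22.
Qed.

Definition isocomma : groupoid :=
  @Groupoid iso_ob iso_hom iso_id iso_comp iso_compA iso_comp1m iso_compm1 iso_inv.
End Isocomma.

(* the fully faithful functor  X x_H Y -> X x_G Y, (x,y,h) |-> (x,y,i h) *)
Section Embed.
Variables (X Y H G : groupoid) (i : functor H G) (a : functor X H) (b : functor Y H).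
Let S := isocomma a b.
Let T := isocomma (fcomp i a) (fcomp i b).
Definition emb_ob (o : ob S) : ob T :=
  existT (fun p : ob X * ob Y => hom (fob (fcomp i a) p.1) (fob (fcomp i b) p.2))
    (tag o) (fhom i (tagged o)).
Lemma emb_homP (o o' : ob S) (f : hom o o') :
  @iso_rel _ _ _ (fcomp i a) (fcomp i b) (emb_ob o) (emb_ob o') (val f).
Proof.
case: f => [[f1 f2] Hf] /=; move/eqP: Hf => Hf; apply/eqP.
by rewrite /= /fcomp_hom -!fhomM Hf.
Qed.
Definition emb_hom (o o' : ob S) (f : hom o o') : hom (emb_ob o) (emb_ob o') :=
  exist (@iso_rel _ _ _ (fcomp i a) (fcomp i b) (emb_ob o) (emb_ob o')) (val f) (emb_homP f).
Definition emb : functor S T.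
Proof.
refine (@Functor S T emb_ob emb_hom _ _).
  by move=> o; apply: val_inj.
by move=> o1 o2 o3 g f; apply: val_inj.
Defined.

(* boundary: objects of X x_G Y in connected components not meeting
   the image of X x_H Y *)
Definition in_bdry (o : ob T) : bool :=
  ~~ [exists p : ob S, [exists f : hom (emb_ob p) o, true]].
Definition bdry : groupoid := subgroupoid in_bdry.
Definition bdry_incl : functor bdry T := incl in_bdry.
End Embed.

(* (x,y,h) |-> (k x, l y, h) : X x_Z Y -> X' x_Z Y'  when a = a' k, b = b' l *)
Section CanH.
Variables (X Y X' Y' Z : groupoid) (a' : functor X' Z) (b' : functor Y' Z)
          (k : functor X X') (l : functor Y Y').
Let S := isocomma (fcomp a' k) (fcomp b' l).
Let T := isocomma a' b'.
Definition canH_ob (o : ob S) : ob T :=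
  existT (fun p : ob X' * ob Y' => hom (fob a' p.1) (fob b' p.2))
    (fob k (tag o).1, fob l (tag o).2) (tagged o).
Lemma canH_homP (o o' : ob S) (f : hom o o') :
  @iso_rel _ _ _ a' b' (canH_ob o) (canH_ob o') (fhom k (val f).1, fhom l (val f).2).
Proof. by case: f => [[f1 f2] Hf]. Qed.
Definition canH_hom (o o' : ob S) (f : hom o o') : hom (canH_ob o) (canH_ob o') :=
  exist (@iso_rel _ _ _ a' b' (canH_ob o) (canH_ob o')) _ (canH_homP f).
Definition canH : functor S T.
Proof.
refine (@Functor S T canH_ob canH_hom _ _).
  by move=> o; apply: val_inj; rewrite /= !fhom1.
by move=> o1 o2 o3 g f; apply: val_inj; rewrite /= !fhomM.
Defined.
End CanH.

(* (x,y,g) |-> (k x, l y, g) : E x_G F -> E' x_G F', where E -> H is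
   iE' k, F -> H is iF' l, and i : H -> G *)
Section CanG.
Variables (E F E' F' H G : groupoid) (i : functor H G)
          (iE' : functor E' H) (k : functor E E') (iF' : functor F' H) (l : functor F F').
Let S := isocomma (fcomp i (fcomp iE' k)) (fcomp i (fcomp iF' l)).
Let T := isocomma (fcomp i iE') (fcomp i iF').
Definition canG_ob (o : ob S) : ob T :=
  existT (fun p : ob E' * ob F' => hom (fob (fcomp i iE') p.1) (fob (fcomp i iF') p.2))
    (fob k (tag o).1, fob l (tag o).2) (tagged o).
Lemma canG_homP (o o' : ob S) (f : hom o o') :
  @iso_rel _ _ _ (fcomp i iE') (fcomp i iF') (canG_ob o) (canG_ob o')
    (fhom k (val f).1, fhom l (val f).2).
Proof. by case: f => [[f1 f2] Hf]. Qed.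
Definition canG_hom (o o' : ob S) (f : hom o o') : hom (canG_ob o) (canG_ob o') :=
  exist (@iso_rel _ _ _ (fcomp i iE') (fcomp i iF') (canG_ob o) (canG_ob o')) _ (canG_homP f).
Definition canG : functor S T.
Proof.
refine (@Functor S T canG_ob canG_hom _ _).
  by move=> o; apply: val_inj; rewrite /= !fhom1.
by move=> o1 o2 o3 g f; apply: val_inj; rewrite /= !fhomM.
Defined.
End CanG.

From Pilot Require Import Defs.
From mathcomp Require Import all_boot.

(* An object (x, y, g) of X x_G Y lies in a component meeting the image of
   X x_H Y exactly when g = i h for some h: an isomorphism (u, v) from an
   image point (x', y', i h') to (x, y, g) gives g = i (b v . h' . a u^-1).
   As the canonical functor keeps the isomorphism g, it therefore reflects
   and preserves the boundary; being injective on objects and faithful, the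
   inclusions of full subgroupoids then pin down a unique restriction, which
   inherits faithfulness from the canonical functor. *)

Set Implicit Arguments.
Unset Strict Implicit.
Unset Printing Implicit Defensive.

Section Restriction.
Variables (C D : groupoid) (F : functor C D) (P : pred (ob C)) (Q : pred (ob D)).
Hypothesis FPQ : forall x, P x -> Q (fob F x).

Definition restrict_ob (x : ob (subgroupoid P)) : ob (subgroupoid Q) :=
  exist _ (fob F (val x)) (FPQ (valP x)).

Definition restrict_hom (x y : ob (subgroupoid P)) (f : hom x y) :
  hom (restrict_ob x) (restrict_ob y) := fhom F f.

Definition restrict : functor (subgroupoid P) (subgroupoid Q) :=
  @Functor (subgroupoid P) (subgroupoid Q) restrict_ob restrict_hom
    (fun x => fhom1 F (val x)) (fun _ _ _ g f => fhomM F g f).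

Lemma incl_restrict : functor_eq (fcomp (incl Q) restrict) (fcomp F (incl P)).
Proof. by []. Qed.

Lemma tot_incl_inj (a b a' b' : ob (subgroupoid Q)) (f : hom a b) (f' : hom a' b') :
  tot (fhom (incl Q) f) = tot (fhom (incl Q) f') -> tot f = tot f'.
Proof.
move=> eq_tot; have [/val_inj eq_a /val_inj eq_b] := congr1 (@projT1 _ _) eq_tot.
by subst a' b'; move/eqP: eq_tot; rewrite eq_Tagged => /eqP /= ->.
Qed.

Lemma incl_functor_eq_cancel (B : groupoid) (R R' : functor B (subgroupoid Q)) :
  functor_eq (fcomp (incl Q) R) (fcomp (incl Q) R') -> functor_eq R R'.
Proof.
move=> [eq_ob eq_hom]; split=> [x | x y f]; first exact: val_inj (eq_ob x).
exact: tot_incl_inj (eq_hom x y f).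
Qed.

Lemma restrict_unique (R : functor (subgroupoid P) (subgroupoid Q)) :
  functor_eq (fcomp (incl Q) R) (fcomp F (incl P)) -> functor_eq R restrict.
Proof. by move=> eq_R; apply: incl_functor_eq_cancel; exact: eq_R. Qed.

Lemma restrict_faithful : faithful F -> faithful restrict.
Proof. by move=> faithF x y; apply: faithF. Qed.

End Restriction.

Section Boundary.
Variables (X Y H G : groupoid) (i : functor H G) (a : functor X H) (b : functor Y H).

Lemma in_bdryE (o : ob (isocomma (fcomp i a) (fcomp i b))) :
  in_bdry o = ~~ [exists h, fhom i h == io_g o].
Proof.
congr (~~ _); apply/existsP/existsP => [[p /existsP [[[u v] /eqP /= rel] _]] | [h /eqP ih]].
  have [u' [_ uu']] := hom_inv u.
  exists (Defs.comp (fhom b v) (Defs.comp (tagged p) (fhom a u'))); apply/eqP.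
  rewrite /fcomp_hom in rel.
  by rewrite !fhomM Defs.compA -rel -Defs.compA -!fhomM uu' !fhom1 compm1.
exists (existT _ (tag o) h); apply/existsP.
have rel : @iso_rel _ _ _ (fcomp i a) (fcomp i b) (emb_ob i (existT _ (tag o) h)) o
             (idm _, idm _).
  by apply/eqP; rewrite /= /fcomp_hom !fhom1 comp1m compm1 ih.
by exists (Sub _ rel).
Qed.

End Boundary.

Section CanonicalFunctor.
Variables (E F E' F' H G : groupoid) (i : functor H G)
          (iE' : functor E' H) (k : functor E E') (iF' : functor F' H) (l : functor F F').

Lemma canG_emb :
  functor_eq (fcomp (canG i iE' k iF' l) (emb i (fcomp iE' k) (fcomp iF' l)))
             (fcomp (emb i iE' iF') (canH iE' iF' k l)).
Proof. by split=> // x y f; congr tot; apply: val_inj. Qed.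

Lemma in_bdry_canG (o : ob (isocomma (fcomp i (fcomp iE' k)) (fcomp i (fcomp iF' l)))) :
  in_bdry (canG_ob o) = in_bdry o.
Proof. by rewrite !in_bdryE. Qed.

Lemma canG_faithful : faithful k -> faithful l -> faithful (canG i iE' k iF' l).
Proof.
move=> faith_k faith_l o o' [[f1 f2] ?] [[g1 g2] ?] /(congr1 val) /= [].
by move=> /faith_k eq1 /faith_l eq2; apply: val_inj; rewrite /= eq1 eq2.
Qed.

End CanonicalFunctor.

Theorem proposition4p10 (H G E E' F F' : groupoid) (i : functor H G)
  (iE' : functor E' H) (k : functor E E') (iF' : functor F' H) (l : functor F F') :
  faithful i -> faithful iE' -> faithful k -> faithful iF' -> faithful l ->
  (* canG : E x_G F -> E' x_G F' maps (the image of) E x_H F into (the image of)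
     E' x_H F', agreeing there with canH : E x_H F -> E' x_H F' *)
  functor_eq (fcomp (canG i iE' k iF' l) (emb i (fcomp iE' k) (fcomp iF' l)))
             (fcomp (emb i iE' iF') (canH iE' iF' k l)) /\
  (* canG maps the boundary part into the boundary part *)
  (forall o : ob (bdry i (fcomp iE' k) (fcomp iF' l)),
      in_bdry (fob (canG i iE' k iF' l) (fob (bdry_incl i (fcomp iE' k) (fcomp iF' l)) o))) /\
  (* hence a unique induced functor d(k,l) between the boundaries, and it is faithful *)
  exists D : functor (bdry i (fcomp iE' k) (fcomp iF' l)) (bdry i iE' iF'),
    functor_eq (fcomp (bdry_incl i iE' iF') D)
               (fcomp (canG i iE' k iF' l) (bdry_incl i (fcomp iE' k) (fcomp iF' l))) /\
    (forall D' : functor (bdry i (fcomp iE' k) (fcomp iF' l)) (bdry i iE' iF'),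
        functor_eq (fcomp (bdry_incl i iE' iF') D')
                   (fcomp (canG i iE' k iF' l) (bdry_incl i (fcomp iE' k) (fcomp iF' l))) ->
        functor_eq D' D) /\
    faithful D.
Proof.
move=> _ _ faith_k _ faith_l.
have canG_bdry o : in_bdry o -> in_bdry (fob (canG i iE' k iF' l) o).
  by rewrite /= in_bdry_canG.
split; first exact: canG_emb.
split=> [o | ]; first exact: canG_bdry (valP o).
exists (restrict canG_bdry); split; first exact: incl_restrict.
split; first exact: restrict_unique.
exact/restrict_faithful/canG_faithful.
Qed.
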